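(* Let $P(o,o'\mid b,b')$, with inputs $b,b'\in\{0,1\}$ and outputs $o,o'\in\{\mathrm{accept},\mathrm{reject}\}$, be a conditional probability distribution satisfying no-signalling in both directions, i.e. $\sum_{o'}P(o,o'\mid b,b')$ does not depend on $b'$ and $\sum_{o}P(o,o'\mid b,b')$ does not depend on $b$. Define $p_d := P(\mathrm{accept},\mathrm{accept}\mid b=d,b'=d)$ for $d\in\{0,1\}$ and $\alpha := P(\mathrm{accept},\mathrm{accept}\mid b=0,b'=1)$. Then $p_0+p_1\le 1+\alpha$.
   Context: Interpretation: $b$ and $b'$ are the bits that two non-communicating agents (Bob and Brian) are instructed to open, and $o$, $o'$ are the outcomes of Alice's separate acceptance tests on Bob's and on Brian's opening, respectively. *)

From Stdlib Require Import Reals.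
Open Scope R_scope.

Inductive outcome := accept | reject.

(* A conditional probability distribution P(o,o' | b,b'),
   inputs b b' : bool (bits 0/1 as false/true). *)
Definition is_cond_distr (P : outcome -> outcome -> bool -> bool -> R) : Prop :=
  (forall o o' b b', 0 <= P o o' b b') /\
  (forall b b', P accept accept b b' + P accept reject b b'
              + P reject accept b b' + P reject reject b b' = 1).

Definition no_signalling (P : outcome -> outcome -> bool -> bool -> R) : Prop :=
  (forall o b b1 b2, P o accept b b1 + P o reject b b1 = P o accept b b2 + P o reject b b2) /\
  (forall o' b' b1 b2, P accept o' b1 b' + P reject o' b1 b' = P accept o' b2 b' + P reject o' b2 b').

From Stdlib Require Import Reals Lra.
Open Scope R_scope.

(* Each accept-accept probability on the diagonal is bounded by a marginal,
   and no-signalling lets both marginals be read off at the off-diagonal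
   inputs (0,1).  Their sum is then 1 + P(aa|01) - P(rr|01). *)

Section NoSignallingBound.

Variable P : outcome -> outcome -> bool -> bool -> R.
Hypothesis P_distr : is_cond_distr P.
Hypothesis P_nosig : no_signalling P.

Lemma joint_le_marginal_fst o o' b b' :
  P o o' b b' <= P o accept b b' + P o reject b b'.
Proof.
  destruct P_distr as [P_ge0 _].
  pose proof (P_ge0 o accept b b'); pose proof (P_ge0 o reject b b').
  destruct o'; lra.
Qed.

Lemma joint_le_marginal_snd o o' b b' :
  P o o' b b' <= P accept o' b b' + P reject o' b b'.
Proof.
  destruct P_distr as [P_ge0 _].
  pose proof (P_ge0 accept o' b b'); pose proof (P_ge0 reject o' b b').
  destruct o; lra.
Qed.

Lemma joint_le_marginal_fst_other o o' b b1 b2 :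
  P o o' b b1 <= P o accept b b2 + P o reject b b2.
Proof.
  destruct P_nosig as [nosig_fst _].
  rewrite <- (nosig_fst o b b1 b2); apply joint_le_marginal_fst.
Qed.

Lemma joint_le_marginal_snd_other o o' b' b1 b2 :
  P o o' b1 b' <= P accept o' b2 b' + P reject o' b2 b'.
Proof.
  destruct P_nosig as [_ nosig_snd].
  rewrite <- (nosig_snd o' b' b1 b2); apply joint_le_marginal_snd.
Qed.

End NoSignallingBound.

Theorem lemma1 (P : outcome -> outcome -> bool -> bool -> R) :
  is_cond_distr P -> no_signalling P ->
  P accept accept false false + P accept accept true true
    <= 1 + P accept accept false true.
Proof.
  intros P_distr P_nosig.
  pose proof (joint_le_marginal_fst_other P P_distr P_nosig
                accept accept false false true) as bound00.
  pose proof (joint_le_marginal_snd_other P P_distr P_nosig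
                accept accept true true false) as bound11.
  destruct P_distr as [P_ge0 P_sum1].
  pose proof (P_sum1 false true).
  pose proof (P_ge0 reject reject false true).
  lra.
Qed.
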